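(* For any forecasting system $\varphi$ and any countable set $\mathscr S$ of selection processes, there is at least one path $\omega\in\Omega$ that is $\mathscr S$-random for $\varphi$.
   Context: $\Omega=\{0,1\}^{\mathbb N}$ is the set of paths $\omega=(\omega_1,\omega_2,\dots)$, $\omega_{1:n}=(\omega_1,\dots,\omega_n)$, $\omega_{1:0}$ the empty sequence; $\mathbb S=\bigcup_{n\ge0}\{0,1\}^n$ the set of situations. A forecasting system is a map $\varphi$ from $\mathbb S$ to closed subintervals of $[0,1]$, with $\underline\varphi(s)=\min\varphi(s)$, $\overline\varphi(s)=\max\varphi(s)$. A selection process is a map $S:\mathbb S\to\{0,1\}$. For a countable set $\mathscr S$ of selection processes, $\omega$ is $\mathscr S$-random for $\varphi$ if for every $S\in\mathscr S$ with $\lim_n\sum_{k=0}^{n-1}S(\omega_{1:k})=\infty$: $\liminf_n\frac{\sum_{k=0}^{n-1}S(\omega_{1:k})[\omega_{k+1}-\underline\varphi(\omega_{1:k})]}{\sum_{k=0}^{n-1}S(\omega_{1:k})}\ge0$ and $\limsup_n\frac{\sum_{k=0}^{n-1}S(\omega_{1:k})[\omega_{k+1}-\overline\varphi(\omega_{1:k})]}{\sum_{k=0}^{n-1}S(\omega_{1:k})}\le0$. *)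

From Stdlib Require Import Reals List.
Open Scope R_scope.

(* Situations: finite binary sequences. Paths: infinite binary sequences,
   w : nat -> bool, with omega_{k+1} = w k (0-indexed). *)
Definition situation := list bool.
Definition path := nat -> bool.

Definition prefix (w : path) (n : nat) : situation := List.map w (List.seq 0 n).

Definition b2R (b : bool) : R := if b then 1 else 0.

Record forecasting_system := {
  fs_lo : situation -> R;
  fs_hi : situation -> R;
  fs_lo_ge0 : forall s, 0 <= fs_lo s;
  fs_lo_le_hi : forall s, fs_lo s <= fs_hi s;
  fs_hi_le1 : forall s, fs_hi s <= 1 }.

Definition selection := situation -> bool.

Fixpoint psum (f : nat -> R) (n : nat) : R :=
  match n with O => 0 | S m => psum f m + f m end.

Definition sel_count (S : selection) (w : path) (n : nat) : R :=
  psum (fun k => b2R (S (prefix w k))) n.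

Definition avg_dev (S : selection) (w : path) (g : situation -> R) (n : nat) : R :=
  psum (fun k => b2R (S (prefix w k)) * (b2R (w k) - g (prefix w k))) n
  / sel_count S w n.

Definition diverges_to_infty (u : nat -> R) : Prop :=
  forall M, exists N, forall n, (N <= n)%nat -> M < u n.

Definition liminf_ge0 (u : nat -> R) : Prop :=
  forall eps, 0 < eps -> exists N, forall n, (N <= n)%nat -> - eps < u n.

Definition limsup_le0 (u : nat -> R) : Prop :=
  forall eps, 0 < eps -> exists N, forall n, (N <= n)%nat -> u n < eps.

Definition countable_set {T : Type} (P : T -> Prop) : Prop :=
  exists f : nat -> option T, forall x, P x -> exists n, f n = Some x.

Definition S_random (SS : selection -> Prop) (phi : forecasting_system) (w : path) : Prop :=
  forall S, SS S -> diverges_to_infty (sel_count S w) ->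
    liminf_ge0 (avg_dev S w (fs_lo phi)) /\ limsup_le0 (avg_dev S w (fs_hi phi)).

From Stdlib Require Import Reals List Lra Lia Cantor.
Open Scope R_scope.

(* For a selection S, a step d = 1/(m+2) and a side (upper or lower forecast),
   the capital exp (sum_k S * (d * dev_k - 2 d^2)) is a supermartingale under the
   lower forecast: every increment y = d * dev lies in [-d, d] and has mean <= 0,
   and then exp (y - 2 d^2) has mean <= 1.  Countably many such tests, the j-th
   weighted by 2^-(j+1) and started at time j with capital 1, form a mixture that
   stays below 1 if Sceptic always picks the outcome that does not raise it.
   Along the resulting path every test is bounded, i.e.
   d * sum S dev <= K + 2 d^2 * sum S; as sum S -> oo this makes the selected
   average deviation eventually below 4 d, and d can be taken arbitrarily small. *)

Lemma psum_ext f g n : (forall k, (k < n)%nat -> f k = g k) -> psum f n = psum g n.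
Proof.
  induction n as [|n IH]; intros Hfg; simpl; [reflexivity|].
  rewrite IH by (intros; apply Hfg; lia). rewrite Hfg by lia. reflexivity.
Qed.

Lemma psum_le f g n : (forall k, (k < n)%nat -> f k <= g k) -> psum f n <= psum g n.
Proof.
  induction n as [|n IH]; intros Hfg; simpl; [lra|].
  assert (f n <= g n) by (apply Hfg; lia).
  assert (psum f n <= psum g n) by (apply IH; intros; apply Hfg; lia).
  lra.
Qed.

Lemma psum_add f g n : psum (fun k => f k + g k) n = psum f n + psum g n.
Proof. induction n as [|n IH]; simpl; [lra|]. rewrite IH. lra. Qed.

Lemma psum_scal c f n : psum (fun k => c * f k) n = c * psum f n.
Proof. induction n as [|n IH]; simpl; [lra|]. rewrite IH. lra. Qed.

Lemma psum_nonneg f n : (forall k, 0 <= f k) -> 0 <= psum f n.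
Proof. intros Hf. induction n as [|n IH]; simpl; [lra|]. specialize (Hf n). lra. Qed.

Lemma psum_ge_term f n j : (forall k, 0 <= f k) -> (j < n)%nat -> f j <= psum f n.
Proof.
  intros Hf. induction n as [|n IH]; simpl; intros Hj; [lia|].
  destruct (Nat.eq_dec j n) as [->|Hne].
  - pose proof (psum_nonneg f n Hf). lra.
  - assert (f j <= psum f n) by (apply IH; lia). specialize (Hf n). lra.
Qed.

Lemma psum_indicator_lt j n :
  psum (fun k => if (j <=? k)%nat then 0 else 1) n = INR (Nat.min n j).
Proof.
  induction n as [|n IH]; simpl psum; [reflexivity|]. rewrite IH.
  destruct (Nat.leb_spec j n).
  - replace (Nat.min (S n) j) with (Nat.min n j) by lia. lra.
  - replace (Nat.min (S n) j) with (S (Nat.min n j)) by lia. rewrite S_INR. lra.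
Qed.

Lemma prefix_ext w w' n :
  (forall k, (k < n)%nat -> w k = w' k) -> prefix w n = prefix w' n.
Proof.
  intros Hww'. unfold prefix. apply map_ext_in.
  intros k Hk. apply in_seq in Hk. apply Hww'. lia.
Qed.

Lemma prefix_S w n : prefix w (S n) = prefix w n ++ w n :: nil.
Proof. unfold prefix. rewrite seq_S, map_app. reflexivity. Qed.

Lemma prefix_length w n : length (prefix w n) = n.
Proof. unfold prefix. rewrite length_map, length_seq. reflexivity. Qed.

Lemma nth_prefix w n k : (k < n)%nat -> nth k (prefix w n) false = w k.
Proof.
  intros Hk. rewrite nth_indep with (d' := w 0%nat) by (rewrite prefix_length; lia).
  unfold prefix. rewrite map_nth, seq_nth by lia. reflexivity.
Qed.

Lemma exp_le_quadratic y : y <= 1/2 -> exp y <= 1 + y + 2 * y ^ 2.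
Proof.
  intros Hy.
  assert (Hinv : exp y * exp (- y) = 1)
    by (rewrite <- exp_plus, Rplus_opp_r; apply exp_0).
  pose proof (exp_ineq1_le (- y)). pose proof (exp_pos y).
  assert (exp y * (1 - y) <= 1) by (rewrite <- Hinv; apply Rmult_le_compat_l; lra).
  assert (1 <= (1 + y + 2 * y ^ 2) * (1 - y)) by nra.
  nra.
Qed.

Lemma exp_mean_le1 p d y1 y0 :
  0 <= p <= 1 -> 0 < d <= 1/2 -> -d <= y1 <= d -> -d <= y0 <= d ->
  p * y1 + (1 - p) * y0 <= 0 ->
  p * exp (y1 - 2 * d ^ 2) + (1 - p) * exp (y0 - 2 * d ^ 2) <= 1.
Proof.
  intros Hp Hd Hy1 Hy0 Hmean.
  unfold Rminus. rewrite !exp_plus.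
  set (E := exp (- (2 * d ^ 2))).
  assert (0 < E) by apply exp_pos.
  assert (HE : E * (1 + 2 * d ^ 2) <= 1).
  { assert (Hinv : E * exp (2 * d ^ 2) = 1)
      by (unfold E; rewrite <- exp_plus, Rplus_opp_l; apply exp_0).
    pose proof (exp_ineq1_le (2 * d ^ 2)). nra. }
  pose proof (exp_le_quadratic y1 ltac:(lra)). pose proof (exp_le_quadratic y0 ltac:(lra)).
  assert (exp y1 <= 1 + y1 + 2 * d ^ 2) by nra.
  assert (exp y0 <= 1 + y0 + 2 * d ^ 2) by nra.
  assert (p * exp y1 + (1 - p) * exp y0 <= 1 + 2 * d ^ 2) by nra.
  nra.
Qed.

Section StrategyPath.

Variable choose : situation -> bool.

Fixpoint strategy_prefix (n : nat) : situation :=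
  match n with
  | O => nil
  | S n => strategy_prefix n ++ choose (strategy_prefix n) :: nil
  end.

Definition strategy_path : path := fun n => choose (strategy_prefix n).

Lemma prefix_strategy_path n : prefix strategy_path n = strategy_prefix n.
Proof. induction n as [|n IH]; [reflexivity|]. rewrite prefix_S, IH. reflexivity. Qed.

Lemma strategy_pathE n : strategy_path n = choose (prefix strategy_path n).
Proof. rewrite prefix_strategy_path. reflexivity. Qed.

End StrategyPath.

Section TestMixture.

Variable p : situation -> R.
Variable t : nat -> situation -> bool -> R.

Hypothesis p_range : forall s, 0 <= p s <= 1.
Hypothesis t_supermartingale :
  forall j s, p s * exp (t j s true) + (1 - p s) * exp (t j s false) <= 1.
Hypothesis t_le1 : forall j s b, t j s b <= 1.

Definition weight (j : nat) : R := (/ 2) ^ S j.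

Lemma weight_pos j : 0 < weight j.
Proof. apply pow_lt. lra. Qed.

(* Test [j] only bets from time [j] on, so it enters the mixture with capital 1. *)
Definition log_capital (j : nat) (w : path) (n : nat) : R :=
  psum (fun k => if (j <=? k)%nat then t j (prefix w k) (w k) else 0) n.

Definition mixture (w : path) (n : nat) : R :=
  psum (fun j => weight j * exp (log_capital j w n)) (S n).

Definition mixture_after (w : path) (n : nat) (b : bool) : R :=
  psum (fun j => weight j * exp (log_capital j w n + t j (prefix w n) b)) (S n).

Definition greedy_move (s : situation) : bool :=
  let w := fun k => nth k s false in
  if Rle_dec (mixture_after w (length s) true) (mixture_after w (length s) false)
  then true else false.

Definition greedy_path : path := strategy_path greedy_move.

Lemma log_capital_ext j w w' n :
  (forall k, (k < n)%nat -> w k = w' k) -> log_capital j w n = log_capital j w' n.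
Proof.
  intros Hww'. apply psum_ext. intros k Hk.
  rewrite (prefix_ext w w' k) by (intros; apply Hww'; lia).
  rewrite Hww' by exact Hk. reflexivity.
Qed.

Lemma mixture_after_ext w w' n b :
  (forall k, (k < n)%nat -> w k = w' k) -> mixture_after w n b = mixture_after w' n b.
Proof.
  intros Hww'. apply psum_ext. intros j _.
  rewrite (prefix_ext w w' n), (log_capital_ext j w w' n) by exact Hww'. reflexivity.
Qed.

Lemma greedy_path_min n b :
  mixture_after greedy_path n (greedy_path n) <= mixture_after greedy_path n b.
Proof.
  assert (Hreplay : forall b',
    mixture_after (fun k => nth k (prefix greedy_path n) false)
      (length (prefix greedy_path n)) b' = mixture_after greedy_path n b').
  { intros b'. rewrite prefix_length. apply mixture_after_ext. intros k Hk.
    apply nth_prefix. exact Hk. }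
  unfold greedy_path at 2. rewrite strategy_pathE. fold greedy_path.
  unfold greedy_move. rewrite !Hreplay.
  destruct (Rle_dec (mixture_after greedy_path n true) (mixture_after greedy_path n false));
    destruct b; lra.
Qed.

Lemma mixture_after_mean w n :
  p (prefix w n) * mixture_after w n true + (1 - p (prefix w n)) * mixture_after w n false
  <= mixture w n.
Proof.
  unfold mixture_after, mixture. rewrite <- !psum_scal, <- psum_add.
  apply psum_le. intros j _. rewrite !exp_plus.
  set (q := p (prefix w n)). set (c := weight j * exp (log_capital j w n)).
  assert (0 < c) by (apply Rmult_lt_0_compat; [apply weight_pos|apply exp_pos]).
  pose proof (t_supermartingale j (prefix w n)) as Hstep. fold q in Hstep.
  replace (q * (weight j * (exp (log_capital j w n) * exp (t j (prefix w n) true)))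
           + (1 - q) * (weight j * (exp (log_capital j w n) * exp (t j (prefix w n) false))))
    with (c * (q * exp (t j (prefix w n) true) + (1 - q) * exp (t j (prefix w n) false)))
    by (unfold c; ring).
  nra.
Qed.

Lemma log_capital_before j w n : (n <= j)%nat -> log_capital j w n = 0.
Proof.
  intros Hnj. induction n as [|n IH]; [reflexivity|].
  unfold log_capital. simpl psum. fold (log_capital j w n).
  rewrite IH by lia. destruct (Nat.leb_spec j n); [lia|lra].
Qed.

Lemma log_capital_S j w n :
  (j <= n)%nat -> log_capital j w (S n) = log_capital j w n + t j (prefix w n) (w n).
Proof.
  intros Hjn. unfold log_capital at 1. simpl psum. fold (log_capital j w n).
  destruct (Nat.leb_spec j n); [reflexivity|lia].
Qed.

Lemma mixture_S w n : mixture w (S n) = weight (S n) + mixture_after w n (w n).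
Proof.
  unfold mixture. change (psum ?g (S (S n))) with (psum g (S n) + g (S n)). cbv beta.
  rewrite log_capital_before, exp_0 by lia.
  rewrite (psum_ext _ (fun j => weight j * exp (log_capital j w n + t j (prefix w n) (w n)))).
  - unfold mixture_after. lra.
  - intros j Hj. rewrite log_capital_S by lia. reflexivity.
Qed.

Lemma greedy_mixture_le n : mixture greedy_path n <= 1 - (/ 2) ^ S n.
Proof.
  induction n as [|n IH].
  - unfold mixture, log_capital. simpl. rewrite exp_0. unfold weight. simpl. lra.
  - rewrite mixture_S.
    pose proof (greedy_path_min n true). pose proof (greedy_path_min n false).
    pose proof (mixture_after_mean greedy_path n).
    pose proof (p_range (prefix greedy_path n)).
    assert (mixture_after greedy_path n (greedy_path n) <= mixture greedy_path n) by nra.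
    unfold weight. change ((/ 2) ^ S (S n)) with (/ 2 * (/ 2) ^ S n). lra.
Qed.

Lemma greedy_log_capital_le j n : log_capital j greedy_path n <= INR (S j) * ln 2.
Proof.
  assert (Hln2 : 0 < ln 2) by (rewrite <- ln_1; apply ln_increasing; lra).
  destruct (Compare_dec.le_lt_dec n j) as [Hnj|Hjn].
  { rewrite log_capital_before by exact Hnj. pose proof (pos_INR (S j)). nra. }
  assert (Hterm : weight j * exp (log_capital j greedy_path n) <= 1).
  { pose proof (greedy_mixture_le n). pose proof (pow_lt (/ 2) (S n) ltac:(lra)).
    enough (weight j * exp (log_capital j greedy_path n) <= mixture greedy_path n) by lra.
    apply (psum_ge_term (fun j => weight j * exp (log_capital j greedy_path n))); [|lia].
    intros k. apply Rlt_le, Rmult_lt_0_compat; [apply weight_pos|apply exp_pos]. }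
  assert (Hpow : exp (INR (S j) * ln 2) * weight j = 1).
  { rewrite <- ln_pow, exp_ln by (try apply pow_lt; lra).
    unfold weight. rewrite <- Rpow_mult_distr. replace (2 * / 2) with 1 by field. apply pow1. }
  destruct (Rle_or_lt (log_capital j greedy_path n) (INR (S j) * ln 2)) as [|Hlt]; [assumption|].
  apply exp_increasing in Hlt. pose proof (weight_pos j). nra.
Qed.

Lemma psum_test_le_log_capital j w n :
  psum (fun k => t j (prefix w k) (w k)) n <= log_capital j w n + INR j.
Proof.
  apply Rle_trans with
    (psum (fun k => (if (j <=? k)%nat then t j (prefix w k) (w k) else 0)
                    + (if (j <=? k)%nat then 0 else 1)) n).
  - apply psum_le. intros k _. pose proof (t_le1 j (prefix w k) (w k)).
    destruct (j <=? k)%nat; lra.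
  - rewrite psum_add, psum_indicator_lt. fold (log_capital j w n).
    assert (INR (Nat.min n j) <= INR j) by (apply le_INR; lia). lra.
Qed.

Lemma tests_bounded_on_some_path :
  exists w : path, forall j, exists C, forall n, psum (fun k => t j (prefix w k) (w k)) n <= C.
Proof.
  exists greedy_path. intros j. exists (INR (S j) * ln 2 + INR j). intros n.
  pose proof (psum_test_le_log_capital j greedy_path n).
  pose proof (greedy_log_capital_le j n). lra.
Qed.

End TestMixture.

Definition step_size (m : nat) : R := / (INR m + 2).

Lemma step_size_range m : 0 < step_size m <= 1/2.
Proof.
  unfold step_size. pose proof (pos_INR m). split.
  - apply Rinv_0_lt_compat. lra.
  - replace (1/2) with (/ 2) by field. apply Rinv_le_contravar; lra.
Qed.

Lemma step_size_small eps : 0 < eps -> exists m, 4 * step_size m < eps.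
Proof.
  intros Heps. destruct (INR_unbounded (4 / eps)) as [m Hm]. exists m.
  unfold step_size. pose proof (pos_INR m).
  assert (eps * INR m > 4).
  { apply Rmult_gt_compat_l with (r := eps) in Hm; [|lra].
    replace (eps * (4 / eps)) with 4 in Hm by (field; lra). lra. }
  apply Rmult_lt_reg_r with (INR m + 2); [lra|].
  replace (4 * / (INR m + 2) * (INR m + 2)) with 4 by (field; lra). nra.
Qed.

Lemma limsup_ratio_le0 (A N : nat -> R) :
  diverges_to_infty N ->
  (forall m, exists K, forall n, step_size m * A n - 2 * step_size m ^ 2 * N n <= K) ->
  limsup_le0 (fun n => A n / N n).
Proof.
  intros Hdiv Hbounded eps Heps.
  destruct (step_size_small eps Heps) as [m Hm]. destruct (Hbounded m) as [K HK].
  pose proof (step_size_range m) as Hd. set (d := step_size m) in *.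
  assert (Hde : 0 < d * eps) by nra.
  destruct (Hdiv (2 * Rabs K / (d * eps))) as [N0 HN0]. exists N0. intros n Hn.
  specialize (HN0 n Hn). specialize (HK n). cbv beta.
  assert (HM : 0 <= 2 * Rabs K / (d * eps))
    by (apply Rmult_le_pos; [pose proof (Rabs_pos K); lra|apply Rlt_le, Rinv_0_lt_compat, Hde]).
  assert (HNpos : 0 < N n) by lra.
  assert (HKlt : Rabs K < d * eps * N n / 2).
  { apply Rmult_gt_compat_l with (r := d * eps / 2) in HN0; [|lra].
    replace (d * eps / 2 * (2 * Rabs K / (d * eps))) with (Rabs K) in HN0 by (field; lra).
    lra. }
  pose proof (Rle_abs K).
  assert (0 <= d * N n * (eps - 4 * d)) by (apply Rmult_le_pos; [apply Rmult_le_pos|]; lra).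
  assert (2 * d ^ 2 * N n <= d * eps * N n / 2) by nra.
  assert (d * A n < d * (eps * N n)) by nra.
  assert (A n < eps * N n) by (apply Rmult_lt_reg_l with d; lra).
  apply Rmult_lt_reg_r with (N n); [exact HNpos|].
  unfold Rdiv. rewrite Rmult_assoc, Rinv_l by lra. lra.
Qed.

Definition deviation (phi : forecasting_system) (upper : bool) (s : situation) (b : bool) : R :=
  if upper then b2R b - fs_hi phi s else fs_lo phi s - b2R b.

Lemma deviation_range phi upper s b : -1 <= deviation phi upper s b <= 1.
Proof.
  pose proof (fs_lo_ge0 phi s). pose proof (fs_lo_le_hi phi s). pose proof (fs_hi_le1 phi s).
  destruct upper, b; simpl; lra.
Qed.

Lemma deviation_mean_le0 phi upper s :
  fs_lo phi s * deviation phi upper s true + (1 - fs_lo phi s) * deviation phi upper s false <= 0.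
Proof. pose proof (fs_lo_le_hi phi s). destruct upper; simpl; lra. Qed.

Definition selection_test (phi : forecasting_system) (S : selection) (m : nat) (upper : bool)
  (s : situation) (b : bool) : R :=
  if S s then step_size m * deviation phi upper s b - 2 * step_size m ^ 2 else 0.

Lemma selection_test_supermartingale phi S m upper s :
  fs_lo phi s * exp (selection_test phi S m upper s true)
  + (1 - fs_lo phi s) * exp (selection_test phi S m upper s false) <= 1.
Proof.
  unfold selection_test. destruct (S s); [|rewrite exp_0; lra].
  pose proof (step_size_range m). pose proof (deviation_mean_le0 phi upper s).
  pose proof (deviation_range phi upper s true). pose proof (deviation_range phi upper s false).
  pose proof (fs_lo_ge0 phi s). pose proof (fs_lo_le_hi phi s). pose proof (fs_hi_le1 phi s).
  apply exp_mean_le1; try lra; nra.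
Qed.

Lemma selection_test_le1 phi S m upper s b : selection_test phi S m upper s b <= 1.
Proof.
  unfold selection_test. destruct (S s); [|lra].
  pose proof (step_size_range m). pose proof (deviation_range phi upper s b). nra.
Qed.

Definition selected_deviation (phi : forecasting_system) (S : selection) (upper : bool)
  (w : path) (n : nat) : R :=
  psum (fun k => b2R (S (prefix w k)) * deviation phi upper (prefix w k) (w k)) n.

Lemma psum_selection_test phi S m upper w n :
  psum (fun k => selection_test phi S m upper (prefix w k) (w k)) n
  = step_size m * selected_deviation phi S upper w n - 2 * step_size m ^ 2 * sel_count S w n.
Proof.
  unfold selected_deviation, sel_count.
  match goal with |- _ = ?d * ?A - ?c * ?N => replace (d * A - c * N) with (d * A + - c * N) by ring end.
  rewrite <- !psum_scal, <- psum_add.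
  apply psum_ext. intros k _. unfold selection_test. destruct (S (prefix w k)); simpl; ring.
Qed.

Lemma avg_dev_hi phi S w n :
  avg_dev S w (fs_hi phi) n = selected_deviation phi S true w n / sel_count S w n.
Proof. reflexivity. Qed.

Lemma avg_dev_lo phi S w n :
  avg_dev S w (fs_lo phi) n = - (selected_deviation phi S false w n / sel_count S w n).
Proof.
  assert (Hsum : psum (fun k => b2R (S (prefix w k)) * (b2R (w k) - fs_lo phi (prefix w k))) n
                 = -1 * selected_deviation phi S false w n).
  { unfold selected_deviation. rewrite <- psum_scal. apply psum_ext. intros k _. simpl. ring. }
  unfold avg_dev. rewrite Hsum. unfold Rdiv. ring.
Qed.

Definition enum_selection (f : nat -> option selection) (i : nat) : selection :=
  match f i with Some sel => sel | None => fun _ => false end.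

Definition test_index (j : nat) : nat * nat * bool :=
  let (i, k) := of_nat j in let (m, u) := of_nat k in (i, m, Nat.eqb u 0).

Lemma test_index_surjective i m upper : exists j, test_index j = (i, m, upper).
Proof.
  exists (to_nat (i, to_nat (m, if upper then 0 else 1)))%nat.
  unfold test_index. rewrite !cancel_of_to. destruct upper; reflexivity.
Qed.

Theorem corollary25 (phi : forecasting_system) (SS : selection -> Prop) :
  countable_set SS -> exists w : path, S_random SS phi w.
Proof.
  intros [f Hf].
  set (tests := fun j =>
    let '(i, m, upper) := test_index j in selection_test phi (enum_selection f i) m upper).
  destruct (tests_bounded_on_some_path (fs_lo phi) tests) as [w Hw].
  - intros s. pose proof (fs_lo_ge0 phi s). pose proof (fs_lo_le_hi phi s).
    pose proof (fs_hi_le1 phi s). lra.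
  - intros j s. unfold tests. destruct (test_index j) as [[i m] upper].
    apply selection_test_supermartingale.
  - intros j s b. unfold tests. destruct (test_index j) as [[i m] upper].
    apply selection_test_le1.
  - exists w. intros S HS Hdiv. destruct (Hf S HS) as [i Hi].
    assert (Hbounded : forall upper m, exists K, forall n,
      step_size m * selected_deviation phi S upper w n - 2 * step_size m ^ 2 * sel_count S w n <= K).
    { intros upper m. destruct (test_index_surjective i m upper) as [j Hj].
      destruct (Hw j) as [K HK]. exists K. intros n. rewrite <- psum_selection_test.
      specialize (HK n). unfold tests, enum_selection in HK. rewrite Hj, Hi in HK. exact HK. }
    split; intros eps Heps.
    + destruct (limsup_ratio_le0 _ _ Hdiv (Hbounded false) eps Heps) as [N HN].
      exists N. intros n Hn. rewrite avg_dev_lo. specialize (HN n Hn). simpl in HN. lra.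
    + destruct (limsup_ratio_le0 _ _ Hdiv (Hbounded true) eps Heps) as [N HN].
      exists N. intros n Hn. rewrite avg_dev_hi. exact (HN n Hn).
Qed.
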